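(* Let $\lambda>0$, $\mu>0$ and $0<b<a<1$, and define $$g(\lambda)=\frac{\frac{\mu}{\lambda+\mu}+\frac{a\mu}{\lambda+a\mu}+\frac{b\mu}{\lambda+b\mu}+0\cdot\frac{2}{\lambda}}{\frac{1}{\lambda+\mu}+\frac{1}{\lambda+a\mu}+\frac{1}{\lambda+b\mu}+\frac{2}{\lambda}}.$$ If $g(\lambda)>\lambda$ (the stability condition of the 4-phase model), then $g(\lambda)<b\mu$.
   Context: Here $g(\lambda)$ is the long-run average service rate (for large queue length) of the following 4-phase vacation queue: a continuous-time Markov chain on states $(n,i)$, $n\ge 0$, $i\in\{1,2,3,4\}$, with $n$ the number of customers and $i$ the server phase; for $n\ge1$ and $i\in\{1,2,3\}$, $(n,i)\to(n-1,i+1)$ at rate $\mu_i$ (where $\mu_1=\mu,\mu_2=a\mu,\mu_3=b\mu$) and $(n,i)\to(n+1,i+1)$ at rate $\lambda$; $(0,i)\to(1,i+1)$ at rate $\lambda$ for $i\in\{1,2,3\}$; and $(n,4)\to(n+2,1)$ at rate $\lambda/2$. The conclusion means this model's average service rate is below that of an $M/M/1$ queue with service rate $b\mu$. *)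

From mathcomp Require Import all_boot all_order all_algebra.
Set Implicit Arguments. Unset Strict Implicit. Unset Printing Implicit Defensive.
Import Order.TTheory GRing.Theory Num.Theory.
Local Open Scope ring_scope.

Definition g (R : realFieldType) (mu a b lambda : R) : R :=
  (mu / (lambda + mu) + (a * mu) / (lambda + a * mu)
     + (b * mu) / (lambda + b * mu) + 0 * (2 / lambda))
  / (1 / (lambda + mu) + 1 / (lambda + a * mu) + 1 / (lambda + b * mu)
     + 2 / lambda).

From mathcomp Require Import all_boot all_order all_algebra.
From mathcomp Require Import ring lra.
Set Implicit Arguments. Unset Strict Implicit. Unset Printing Implicit Defensive.
Import Order.TTheory GRing.Theory Num.Theory.
Local Open Scope ring_scope.

(* Write each phase through the probability [race m = lambda / (lambda + m)]
   that an arrival beats a service completion at rate [m]: then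
   [m / (lambda + m) = 1 - race m] and [1 / (lambda + m) = race m / lambda],
   so with [P] the sum of the three race probabilities
   [g = lambda (3 - P) / (P + 2)].  Stability [g > lambda] says [2 P < 1];
   since [bmu = lambda (1 - p) / p] for [p = race (bmu) <= P], the claim
   [g < bmu] reduces to [5 p < P + 2], which follows from [p <= P < 1/2]. *)

Section RaceProbability.

Variables (R : realFieldType) (lambda : R).
Hypothesis lambda_gt0 : 0 < lambda.

Definition race (m : R) : R := lambda / (lambda + m).

Lemma race_gt0 (m : R) : 0 < m -> 0 < race m.
Proof. by move=> m_gt0; rewrite divr_gt0 // ltr_wpDr // ltW. Qed.

Lemma rate_race (m : R) : 0 < m -> m / (lambda + m) = 1 - race m.
Proof. by move=> m_gt0; rewrite /race; field; rewrite !lt0r_neq0 ?addr_gt0. Qed.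

Lemma inv_race (m : R) : 0 < m -> 1 / (lambda + m) = race m / lambda.
Proof. by move=> m_gt0; rewrite /race; field; rewrite !lt0r_neq0 ?addr_gt0. Qed.

Lemma rate_of_race (m : R) : 0 < m -> m = lambda * (1 - race m) / race m.
Proof. by move=> m_gt0; rewrite /race; field; rewrite !lt0r_neq0 ?addr_gt0. Qed.

Definition load_rate (P : R) : R := lambda * (3 - P) / (P + 2).

Lemma g_race (mu a b : R) : 0 < mu -> 0 < a * mu -> 0 < b * mu ->
  g mu a b lambda = load_rate (race mu + race (a * mu) + race (b * mu)).
Proof.
move=> mu_gt0 amu_gt0 bmu_gt0.
have p1 := race_gt0 mu_gt0; have p2 := race_gt0 amu_gt0.
have p3 := race_gt0 bmu_gt0.
rewrite /g /load_rate !rate_race //.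
have sum_gt0 : 0 < race mu + race (a * mu) + race (b * mu) + 2 by lra.
by rewrite !inv_race //; field; rewrite !lt0r_neq0.
Qed.

Lemma load_rate_gt_lambda (P : R) : 0 <= P ->
  lambda < load_rate P -> 2 * P < 1.
Proof.
move=> P_ge0; have P2_gt0 : 0 < P + 2 by lra.
by rewrite /load_rate ltr_pdivlMr // ltr_pM2l // => ?; lra.
Qed.

Lemma load_rate_lt_rate_of_race (p P : R) : 0 < p -> p <= P -> 2 * P < 1 ->
  load_rate P < lambda * (1 - p) / p.
Proof.
move=> p_gt0 le_pP P_small.
have P2_gt0 : 0 < P + 2 by lra.
rewrite /load_rate ltr_pdivrMr // mulrAC ltr_pdivlMr // -subr_gt0.
have -> : lambda * (1 - p) * (P + 2) - lambda * (3 - P) * p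
          = lambda * (P + 2 - 5 * p) by ring.
by rewrite mulr_gt0 //; lra.
Qed.

End RaceProbability.

Theorem theorem2 (R : realFieldType) (lambda mu a b : R) :
  0 < lambda -> 0 < mu -> 0 < b -> b < a -> a < 1 ->
  g mu a b lambda > lambda -> g mu a b lambda < b * mu.
Proof.
move=> lambda_gt0 mu_gt0 b_gt0 lt_ba _.
have amu_gt0 : 0 < a * mu by rewrite mulr_gt0 // (lt_trans b_gt0).
have bmu_gt0 : 0 < b * mu by rewrite mulr_gt0.
have p1 := race_gt0 lambda_gt0 mu_gt0; have p2 := race_gt0 lambda_gt0 amu_gt0.
have p3 := race_gt0 lambda_gt0 bmu_gt0.
rewrite g_race // => /load_rate_gt_lambda stable.
rewrite [X in _ < X](rate_of_race lambda_gt0 bmu_gt0).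
by apply: load_rate_lt_rate_of_race => //; lra.
Qed.
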